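(* Let $n\ge 2$ and let $A_1,\dots,A_{2n}$ be the vertices $\pm\mathbf e_1,\dots,\pm\mathbf e_n$ of the cross-polytope in $\mathbb R^n$ (where $\mathbf e_1,\dots,\mathbf e_n$ is the standard basis). Let $\Gamma$ be the sphere of radius $r>0$ centred at the origin $O$, let $E=\{\pm r\mathbf e_i: 1\le i\le n\}$ (the points where the rays $OA_j$ meet $\Gamma$) and $D=\{\tfrac{r}{\sqrt n}(\varepsilon_1,\dots,\varepsilon_n):\varepsilon_j\in\{1,-1\}\}$ (the points where the perpendiculars from $O$ to the facets of the cross-polytope meet $\Gamma$). Fix $h\ge0$ and put $C_n(M,\lambda)=\sum_{i=1}^{2n}(|MA_i|^2+h)^{\lambda/2}$ for $M\in\Gamma$. Then: (1) If $\lambda<0$: the minimum of $C_n(\cdot,\lambda)$ on $\Gamma$ is attained precisely at the points of $D$, and, unless $h=0$ and $r=1$ (in which case $C_n(\cdot,\lambda)$ is unbounded), the maximum is attained precisely at the points of $E$. (2) If $\lambda\in\{0,2,4,6\}$, $C_n(M,\lambda)$ is independent of $M\in\Gamma$; these are the only real $\lambda$ with this property. If $\lambda\in(0,2)\cup(4,6)$, the maximum is attained precisely at the points of $D$ and the minimum precisely at the points of $E$. If $\lambda\in(2,4)$, the minimum is attained precisely at the points of $D$ and the maximum precisely at the points of $E$. (3) If $\lambda>6$: the maximum is attained precisely at the points of $E$ and the minimum precisely at the points of $D$.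
   Context: $|MA|$ denotes Euclidean distance. *)

(* classical reals. Points of R^n are functions nat -> R,
   of which only the coordinates 0..n-1 matter. *)
From Stdlib Require Import Reals.
Open Scope R_scope.

Fixpoint rsum (n : nat) (f : nat -> R) : R :=
  match n with
  | O => 0
  | S k => rsum k f + f k
  end.

Definition pt := nat -> R.

Definition pt_eq (n : nat) (M N : pt) : Prop :=
  forall i, (i < n)%nat -> M i = N i.

Definition dist2 (n : nat) (M A : pt) : R :=
  rsum n (fun i => (M i - A i) ^ 2).

Definition on_sphere (n : nat) (r : R) (M : pt) : Prop :=
  rsum n (fun i => M i ^ 2) = r ^ 2.

Definition vertex (j : nat) (s : R) : pt :=
  fun i => if Nat.eq_dec i j then s else 0.

Definition is_sign (s : R) : Prop := s = 1 \/ s = -1.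

(* real power x^y for x >= 0: Rpower for x > 0; 0^y = 0 for y > 0,
   0^0 = 1.  (0^y for y < 0 is +infinity; it never gets used, see
   C_finite below.) *)
Definition rpow (x y : R) : R :=
  if Rlt_dec 0 x then Rpower x y
  else if Req_EM_T y 0 then 1 else 0.

Definition Cn (n : nat) (h lam : R) (M : pt) : R :=
  rsum n (fun j => rpow (dist2 n M (vertex j 1) + h) (lam / 2)
                 + rpow (dist2 n M (vertex j (-1)) + h) (lam / 2)).

(* C_n(M, lambda) is a finite real number (false exactly when lambda < 0
   and some base |MA_i|^2 + h vanishes, where C_n(M,lambda) = +infinity) *)
Definition C_finite (n : nat) (h lam : R) (M : pt) : Prop :=
  0 <= lam \/
  forall j s, (j < n)%nat -> is_sign s -> 0 < dist2 n M (vertex j s) + h.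

Definition inE (n : nat) (r : R) (M : pt) : Prop :=
  exists j s, (j < n)%nat /\ is_sign s /\ pt_eq n M (fun i => r * vertex j s i).

Definition inD (n : nat) (r : R) (M : pt) : Prop :=
  exists eps : nat -> R, (forall i, (i < n)%nat -> is_sign (eps i)) /\
    pt_eq n M (fun i => r / sqrt (INR n) * eps i).

(* The minimum of C_n(.,lam) on Gamma is attained precisely at the points of S
   (points with C = +infinity are trivially not minimizers). *)
Definition min_exactly_at (n : nat) (r h lam : R) (S : pt -> Prop) : Prop :=
  forall M, S M ->
    C_finite n h lam M /\
    forall N, on_sphere n r N -> C_finite n h lam N ->
      Cn n h lam M <= Cn n h lam N /\ (~ S N -> Cn n h lam M < Cn n h lam N).

Definition max_exactly_at (n : nat) (r h lam : R) (S : pt -> Prop) : Prop :=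
  (forall N, on_sphere n r N -> C_finite n h lam N) /\
  forall M, S M ->
    forall N, on_sphere n r N ->
      Cn n h lam N <= Cn n h lam M /\ (~ S N -> Cn n h lam N < Cn n h lam M).

Definition constant_on_sphere (n : nat) (r h lam : R) : Prop :=
  forall M N, on_sphere n r M -> on_sphere n r N ->
    C_finite n h lam M -> C_finite n h lam N -> Cn n h lam M = Cn n h lam N.

From Stdlib Require Import Reals Lra Lia Classical.
Open Scope R_scope.

(* For M on the sphere of radius r and a vertex s e_j (s = +-1),
   |M - s e_j|^2 + h = a - 2 s M_j with a = r^2 + 1 + h, hence
   C_n(M, lambda) = sum_j f(M_j) with the profile f(x) = (a-2x)^m + (a+2x)^m,
   m = lambda / 2.  The profile is even, so C_n is a sum of g(M_j^2) for a
   function g under the constraint sum_j M_j^2 = r^2, M_j^2 in [0, r^2].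
   The analytic heart is that g is strictly convex when
   kappa m = m(m-1)(m-2)(m-3) > 0 and strictly concave when kappa m < 0:
   its derivative f'(x)/(2x) is monotone, which follows from three successive
   mean value arguments (even part, odd part over x, then f'(x)/(2x)).
   Summing the tangent inequality at x0 = r/sqrt n shows that the points of D
   are extremal in one direction; summing the chord inequality on [0, r]
   shows that the points of E are extremal in the other.  For
   lambda in {0,2,4,6} the profile is a polynomial of degree <= 1 in x^2,
   so C_n is constant; otherwise kappa m <> 0 and D and E are separated.
   The degenerate case h = 0, r = 1, lambda < 0 is settled by points
   approaching a vertex. *)

Lemma rpow_pos u m : 0 < u -> rpow u m = Rpower u m.
Proof. intros Hu. unfold rpow. destruct (Rlt_dec 0 u); [reflexivity | lra]. Qed.

Lemma rpow_nonneg x y : 0 <= rpow x y.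
Proof.
  unfold rpow, Rpower. destruct (Rlt_dec 0 x); [left; apply exp_pos|].
  destruct (Req_EM_T y 0); lra.
Qed.

Lemma rpow_diff_sign A B e : 0 < B -> B < A -> e <> 0 ->
  0 < e * (rpow A e - rpow B e).
Proof.
  intros HB HBA He. rewrite !rpow_pos by lra. unfold Rpower.
  assert (Hl : ln B < ln A) by (apply ln_increasing; lra).
  destruct (Rlt_or_le 0 e) as [Hp | Hn].
  - apply Rmult_lt_0_compat; [exact Hp|]. apply Rlt_0_minus, exp_increasing. nra.
  - assert (exp (e * ln A) < exp (e * ln B)) by (apply exp_increasing; nra). nra.
Qed.

Lemma derivable_rpow u m : 0 < u ->
  derivable_pt_lim (fun y => rpow y m) u (m * rpow u (m - 1)).
Proof.
  intros Hu. rewrite rpow_pos by exact Hu.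
  apply (derivable_pt_lim_locally_ext (fun y => Rpower y m) _ u 0 (u + 1));
    [lra | | apply derivable_pt_lim_power; exact Hu].
  intros z Hz. symmetry. apply rpow_pos. lra.
Qed.

Lemma derivable_rpow_affine a c s x : 0 < a + c * x ->
  derivable_pt_lim (fun y => rpow (a + c * y) s) x (c * (s * rpow (a + c * x) (s - 1))).
Proof.
  intros Hpos.
  assert (Haff : derivable_pt_lim (fun y => a + c * y) x c).
  { assert (H := derivable_pt_lim_plus _ _ x _ _ (derivable_pt_lim_const a x)
                   (derivable_pt_lim_scal id c x 1 (derivable_pt_lim_id x))).
    rewrite Rmult_1_r, Rplus_0_l in H. exact H. }
  rewrite Rmult_comm.
  exact (derivable_pt_lim_comp (fun y => a + c * y) (fun u => rpow u s) x c _ Haff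
           (derivable_rpow _ s Hpos)).
Qed.

Lemma derivable_rpow_plus2 a s x : 0 < a + 2 * x ->
  derivable_pt_lim (fun y => rpow (a + 2 * y) s) x (2 * s * rpow (a + 2 * x) (s - 1)).
Proof.
  intros H. rewrite Rmult_assoc. exact (derivable_rpow_affine a 2 s x H).
Qed.

Lemma derivable_rpow_minus2 a s x : 0 < a - 2 * x ->
  derivable_pt_lim (fun y => rpow (a - 2 * y) s) x (- (2 * s * rpow (a - 2 * x) (s - 1))).
Proof.
  intros H.
  apply (derivable_pt_lim_ext (fun y => rpow (a + -2 * y) s)).
  { intros z. f_equal. ring. }
  replace (- (2 * s * rpow (a - 2 * x) (s - 1)))
    with (-2 * (s * rpow (a + -2 * x) (s - 1))) by (replace (a + -2 * x) with (a - 2 * x) by ring; ring).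
  apply derivable_rpow_affine. lra.
Qed.

Lemma continuity_rpow_0 m : 0 < m -> continuity_pt (fun y => rpow y m) 0.
Proof.
  intros Hm eps Heps. unfold rpow at 2. destruct (Rlt_dec 0 0); [lra|].
  destruct (Req_EM_T m 0); [lra|].
  exists (Rpower eps (/ m)). split; [unfold Rpower; apply exp_pos|].
  intros x [_ Hx]. simpl in Hx |- *. unfold R_dist in *. rewrite Rminus_0_r in Hx.
  rewrite Rminus_0_r. unfold rpow. destruct (Rlt_dec 0 x).
  - rewrite Rabs_pos_eq by (unfold Rpower; left; apply exp_pos).
    rewrite Rabs_pos_eq in Hx by lra.
    replace eps with (Rpower (Rpower eps (/ m)) m)
      by (rewrite Rpower_mult, Rinv_l by lra; apply Rpower_1; exact Heps).
    apply Rlt_Rpower_l; [exact Hm | split; assumption].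
  - destruct (Req_EM_T m 0); [lra|]. rewrite Rabs_R0. exact Heps.
Qed.

Lemma cauchy_mvt (f f' g g' : R -> R) x1 x2 : x1 < x2 ->
  (forall c, x1 < c < x2 -> derivable_pt_lim f c (f' c)) ->
  (forall c, x1 < c < x2 -> derivable_pt_lim g c (g' c)) ->
  continuity_pt f x1 -> continuity_pt f x2 ->
  continuity_pt g x1 -> continuity_pt g x2 ->
  exists c, x1 < c < x2 /\ (g x2 - g x1) * f' c = (f x2 - f x1) * g' c.
Proof.
  intros H12 Hf Hg Cf1 Cf2 Cg1 Cg2.
  set (pr1 := fun c (H : x1 < c < x2) => exist _ (f' c) (Hf c H) : derivable_pt f c).
  set (pr2 := fun c (H : x1 < c < x2) => exist _ (g' c) (Hg c H) : derivable_pt g c).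
  assert (Hcont : forall (k : R -> R) (pr : forall c, x1 < c < x2 -> derivable_pt k c),
            continuity_pt k x1 -> continuity_pt k x2 ->
            forall c, x1 <= c <= x2 -> continuity_pt k c).
  { intros k pr C1 C2 c [[Hc1 | <-] [Hc2 | ->]]; try assumption.
    apply derivable_continuous_pt, pr. lra. }
  destruct (MVT f g x1 x2 pr1 pr2 H12 (Hcont f pr1 Cf1 Cf2) (Hcont g pr2 Cg1 Cg2))
    as [c [P Hc]].
  exists c. split; [exact P | exact Hc].
Qed.

(* The profile f(x) = (a - 2x)^s + (a + 2x)^s (on the sphere, C_n is the sum
   of f over the coordinates), its odd companion, and the slope
   f'(x) / (2x), which is the derivative of f with respect to x^2. *)
Definition profile (a s x : R) : R := rpow (a - 2 * x) s + rpow (a + 2 * x) s.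
Definition odd_profile (a s x : R) : R := rpow (a + 2 * x) s - rpow (a - 2 * x) s.
Definition profile_slope (a m x : R) : R := m * odd_profile a (m - 1) x / x.

(* The sign of kappa m decides whether f is convex or concave in x^2. *)
Definition kappa (m : R) : R := m * (m - 1) * (m - 2) * (m - 3).

Lemma profile_even a s x : profile a s (- x) = profile a s x.
Proof.
  unfold profile. replace (a - 2 * - x) with (a + 2 * x) by ring.
  replace (a + 2 * - x) with (a - 2 * x) by ring. ring.
Qed.

Lemma profile_abs a s x : profile a s (Rabs x) = profile a s x.
Proof. unfold Rabs. destruct (Rcase_abs x); [apply profile_even | reflexivity]. Qed.

Lemma profile_nonneg a s x : 0 <= profile a s x.
Proof. unfold profile. pose proof (rpow_nonneg (a - 2 * x) s). pose proof (rpow_nonneg (a + 2 * x) s). lra. Qed.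

Lemma odd_profile_0 a s : odd_profile a s 0 = 0.
Proof. unfold odd_profile. replace (a + 2 * 0) with (a - 2 * 0) by ring. ring. Qed.

Lemma derivable_profile a s x : 0 < a - 2 * x -> 0 < a + 2 * x ->
  derivable_pt_lim (profile a s) x (2 * s * odd_profile a (s - 1) x).
Proof.
  intros Hm Hp. unfold profile, odd_profile.
  replace (2 * s * (rpow (a + 2 * x) (s - 1) - rpow (a - 2 * x) (s - 1)))
    with (- (2 * s * rpow (a - 2 * x) (s - 1)) + 2 * s * rpow (a + 2 * x) (s - 1)) by ring.
  apply (derivable_pt_lim_plus (fun y => rpow (a - 2 * y) s) (fun y => rpow (a + 2 * y) s)).
  - apply derivable_rpow_minus2. exact Hm.
  - apply derivable_rpow_plus2. exact Hp.
Qed.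

Lemma derivable_odd_profile a s x : 0 < a - 2 * x -> 0 < a + 2 * x ->
  derivable_pt_lim (odd_profile a s) x (2 * s * profile a (s - 1) x).
Proof.
  intros Hm Hp. unfold profile, odd_profile.
  replace (2 * s * (rpow (a - 2 * x) (s - 1) + rpow (a + 2 * x) (s - 1)))
    with (2 * s * rpow (a + 2 * x) (s - 1) - - (2 * s * rpow (a - 2 * x) (s - 1))) by ring.
  apply (derivable_pt_lim_minus (fun y => rpow (a + 2 * y) s) (fun y => rpow (a - 2 * y) s)).
  - apply derivable_rpow_plus2. exact Hp.
  - apply derivable_rpow_minus2. exact Hm.
Qed.

Lemma continuity_profile_inner a s x : 0 <= x -> 0 < a - 2 * x ->
  continuity_pt (profile a s) x.
Proof.
  intros Hx Ha. apply derivable_continuous_pt.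
  exists (2 * s * odd_profile a (s - 1) x). apply derivable_profile; lra.
Qed.

Lemma continuity_profile a s x : 0 < a -> 0 <= x -> 0 <= a - 2 * x ->
  (0 < a - 2 * x \/ 0 < s) -> continuity_pt (profile a s) x.
Proof.
  intros Ha Hx Hb [Hin | Hs]; [apply continuity_profile_inner; assumption|].
  destruct Hb as [Hin | Hedge]; [apply continuity_profile_inner; assumption|].
  apply continuity_pt_plus.
  - apply (continuity_pt_comp (fun y => a - 2 * y) (fun u => rpow u s)).
    + apply continuity_pt_minus; [apply continuity_pt_const; intros ? ?; reflexivity|].
      apply continuity_pt_scal, derivable_continuous_pt, derivable_pt_id.
    + unfold comp. rewrite <- Hedge. apply continuity_rpow_0. exact Hs.
  - apply (continuity_pt_comp (fun y => a + 2 * y) (fun u => rpow u s)).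
    + apply continuity_pt_plus; [apply continuity_pt_const; intros ? ?; reflexivity|].
      apply continuity_pt_scal, derivable_continuous_pt, derivable_pt_id.
    + apply derivable_continuous_pt. exists (s * rpow (a + 2 * x) (s - 1)).
      apply derivable_rpow. lra.
Qed.

Lemma profile_monotone a s e1 e2 : 0 <= e1 < e2 -> 0 < a - 2 * e2 -> s <> 0 -> s <> 1 ->
  0 < s * (s - 1) * (profile a s e2 - profile a s e1).
Proof.
  intros [H0 H12] Ha Hs0 Hs1.
  destruct (MVT_cor2 (profile a s) (fun e => 2 * s * odd_profile a (s - 1) e) e1 e2 H12)
    as [t [E Ht]].
  { intros c Hc. apply derivable_profile; lra. }
  rewrite E. unfold odd_profile.
  assert (Hd := rpow_diff_sign (a + 2 * t) (a - 2 * t) (s - 1) ltac:(lra) ltac:(lra) ltac:(lra)).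
  assert (0 < s * s) by (apply Rsqr_pos_lt; exact Hs0).
  replace (s * (s - 1) * (2 * s * (rpow (a + 2 * t) (s - 1) - rpow (a - 2 * t) (s - 1)) * (e2 - e1)))
    with (2 * (s * s) * (e2 - e1) * ((s - 1) * (rpow (a + 2 * t) (s - 1) - rpow (a - 2 * t) (s - 1))))
    by ring.
  apply Rmult_lt_0_compat; [|exact Hd]. apply Rmult_lt_0_compat; lra.
Qed.

Lemma odd_profile_ratio_monotone a p x1 x2 : 0 < x1 < x2 -> 0 < a - 2 * x2 ->
  p <> 0 -> p <> 1 -> p <> 2 ->
  0 < p * (p - 1) * (p - 2) * (x1 * odd_profile a p x2 - x2 * odd_profile a p x1).
Proof.
  intros [H0 H12] Ha Hp0 Hp1 Hp2.
  assert (Hder : forall c, 0 <= c <= x2 ->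
            derivable_pt_lim (odd_profile a p) c (2 * p * profile a (p - 1) c))
    by (intros c Hc; apply derivable_odd_profile; lra).
  destruct (MVT_cor2 _ _ 0 x1 H0 ltac:(intros c Hc; apply Hder; lra)) as [t1 [E1 Ht1]].
  destruct (MVT_cor2 _ _ x1 x2 H12 ltac:(intros c Hc; apply Hder; lra)) as [t2 [E2 Ht2]].
  rewrite odd_profile_0 in E1.
  assert (Hmono := profile_monotone a (p - 1) t1 t2 ltac:(lra) ltac:(lra) ltac:(lra) ltac:(lra)).
  replace (odd_profile a p x2) with (odd_profile a p x1 + 2 * p * profile a (p - 1) t2 * (x2 - x1))
    by lra.
  replace (odd_profile a p x1) with (2 * p * profile a (p - 1) t1 * (x1 - 0)) by lra.
  assert (0 < p * p) by (apply Rsqr_pos_lt; exact Hp0).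
  replace (p * (p - 1) * (p - 2) *
           (x1 * (2 * p * profile a (p - 1) t1 * (x1 - 0) + 2 * p * profile a (p - 1) t2 * (x2 - x1)) -
            x2 * (2 * p * profile a (p - 1) t1 * (x1 - 0))))
    with (2 * (p * p) * x1 * (x2 - x1) *
          ((p - 1) * (p - 1 - 1) * (profile a (p - 1) t2 - profile a (p - 1) t1))) by ring.
  apply Rmult_lt_0_compat; [|exact Hmono].
  apply Rmult_lt_0_compat; [apply Rmult_lt_0_compat; [apply Rmult_lt_0_compat|]|]; lra.
Qed.

(* Step 3: the slope is monotone with the sign of kappa m, i.e. the profile
   is strictly convex (kappa m > 0) or concave (kappa m < 0) in x^2. *)
Lemma profile_slope_monotone a m x1 x2 : 0 < x1 < x2 -> 0 < a - 2 * x2 -> kappa m <> 0 ->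
  kappa m * profile_slope a m x1 < kappa m * profile_slope a m x2.
Proof.
  unfold kappa. intros Hx Ha HK.
  assert (m <> 0) by (intros ->; apply HK; ring).
  assert (m - 1 <> 0) by (intros E; apply HK; rewrite E; ring).
  assert (m - 1 - 1 <> 0) by (intros E; apply HK; replace (m - 2) with (m - 1 - 1) by ring; rewrite E; ring).
  assert (m - 1 - 2 <> 0) by (intros E; apply HK; replace (m - 3) with (m - 1 - 2) by ring; rewrite E; ring).
  assert (Hr := odd_profile_ratio_monotone a (m - 1) x1 x2 Hx Ha ltac:(assumption) ltac:(lra) ltac:(lra)).
  unfold profile_slope. apply Rlt_0_minus.
  assert (0 < m * m) by (apply Rsqr_pos_lt; assumption).
  replace (m * (m - 1) * (m - 2) * (m - 3) * (m * odd_profile a (m - 1) x2 / x2) -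
           m * (m - 1) * (m - 2) * (m - 3) * (m * odd_profile a (m - 1) x1 / x1))
    with ((m * m) * / (x1 * x2) * ((m - 1) * (m - 1 - 1) * (m - 1 - 2) *
           (x1 * odd_profile a (m - 1) x2 - x2 * odd_profile a (m - 1) x1))) by (field; lra).
  apply Rmult_lt_0_compat; [|exact Hr]. apply Rmult_lt_0_compat; [assumption|].
  apply Rinv_0_lt_compat. nra.
Qed.

Lemma profile_mvt a m x1 x2 : 0 <= x1 < x2 -> 0 <= a - 2 * x2 ->
  continuity_pt (profile a m) x1 -> continuity_pt (profile a m) x2 ->
  exists t, x1 < t < x2 /\
    profile a m x2 - profile a m x1 = (x2 * x2 - x1 * x1) * profile_slope a m t.
Proof.
  intros [H0 H12] Ha C1 C2.
  assert (Hsq : forall c, derivable_pt_lim (fun x => x * x) c (2 * c)).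
  { intros c. replace (2 * c) with (1 * c + c * 1) by ring.
    apply (derivable_pt_lim_mult id id); apply derivable_pt_lim_id. }
  assert (Csq : forall c, continuity_pt (fun x => x * x) c)
    by (intros c; apply derivable_continuous_pt; exists (2 * c); apply Hsq).
  destruct (cauchy_mvt (profile a m) (fun x => 2 * m * odd_profile a (m - 1) x)
              (fun x => x * x) (fun x => 2 * x) x1 x2 H12) as [t [Ht E]];
    try (intros; apply Csq); try assumption.
  - intros c Hc. apply derivable_profile; lra.
  - intros c Hc. apply Hsq.
  - exists t. split; [exact Ht|]. unfold profile_slope.
    apply Rmult_eq_reg_r with (2 * t); [|lra].
    rewrite <- E. field. lra.
Qed.

Lemma profile_tangent_strict a m x0 x : 0 < x0 -> 0 <= x -> x <> x0 ->
  0 < a - 2 * x0 -> 0 <= a - 2 * x -> continuity_pt (profile a m) x -> kappa m <> 0 ->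
  kappa m * profile_slope a m x0 * (x * x - x0 * x0) <
  kappa m * (profile a m x - profile a m x0).
Proof.
  intros Hx0 Hx Hne Ha0 Ha Cx HK.
  assert (C0 := continuity_profile_inner a m x0 ltac:(lra) Ha0).
  destruct (Rlt_or_le x0 x) as [Hlt | Hle].
  - destruct (profile_mvt a m x0 x ltac:(lra) Ha C0 Cx) as [t [Ht E]].
    assert (HQ := profile_slope_monotone a m x0 t ltac:(lra) ltac:(lra) HK).
    rewrite E. assert (0 < x * x - x0 * x0) by nra.
    replace (kappa m * ((x * x - x0 * x0) * profile_slope a m t))
      with ((x * x - x0 * x0) * (kappa m * profile_slope a m t)) by ring.
    replace (kappa m * profile_slope a m x0 * (x * x - x0 * x0))
      with ((x * x - x0 * x0) * (kappa m * profile_slope a m x0)) by ring.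
    apply Rmult_lt_compat_l; assumption.
  - destruct (profile_mvt a m x x0 ltac:(lra) ltac:(lra) Cx C0) as [t [Ht E]].
    assert (HQ := profile_slope_monotone a m t x0 ltac:(lra) ltac:(lra) HK).
    replace (profile a m x - profile a m x0) with (- (profile a m x0 - profile a m x)) by ring.
    rewrite E. assert (0 < x0 * x0 - x * x) by nra.
    replace (kappa m * - ((x0 * x0 - x * x) * profile_slope a m t))
      with (- ((x0 * x0 - x * x) * (kappa m * profile_slope a m t))) by ring.
    replace (kappa m * profile_slope a m x0 * (x * x - x0 * x0))
      with (- ((x0 * x0 - x * x) * (kappa m * profile_slope a m x0))) by ring.
    apply Ropp_lt_contravar, Rmult_lt_compat_l; assumption.
Qed.

Lemma sqr_abs x : x * x = Rabs x * Rabs x.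
Proof. rewrite <- Rabs_mult. symmetry. apply Rabs_pos_eq. nra. Qed.

Lemma profile_tangent a m x0 x : 0 < x0 -> 0 < a - 2 * x0 -> 0 <= a - 2 * Rabs x ->
  continuity_pt (profile a m) (Rabs x) -> kappa m <> 0 ->
  kappa m * profile_slope a m x0 * (x * x - x0 * x0) <= kappa m * (profile a m x - profile a m x0) /\
  (Rabs x <> x0 ->
   kappa m * profile_slope a m x0 * (x * x - x0 * x0) < kappa m * (profile a m x - profile a m x0)).
Proof.
  intros Hx0 Ha0 Ha Cx HK. rewrite <- (profile_abs a m x), (sqr_abs x).
  assert (Hstrict : Rabs x <> x0 ->
            kappa m * profile_slope a m x0 * (Rabs x * Rabs x - x0 * x0) <
            kappa m * (profile a m (Rabs x) - profile a m x0))
    by (intros Hne; apply profile_tangent_strict; try assumption; apply Rabs_pos).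
  split; [|exact Hstrict].
  destruct (Req_dec (Rabs x) x0) as [-> | Hne]; [right; ring | left; apply Hstrict, Hne].
Qed.

Lemma profile_chord_strict a m x R : 0 < x < R -> 0 <= a - 2 * R ->
  continuity_pt (profile a m) R -> kappa m <> 0 ->
  kappa m * (profile a m x - profile a m 0) * (R * R) <
  kappa m * (profile a m R - profile a m 0) * (x * x).
Proof.
  intros Hx Ha CR HK.
  assert (C0 := continuity_profile_inner a m 0 ltac:(lra) ltac:(lra)).
  assert (Cx := continuity_profile_inner a m x ltac:(lra) ltac:(lra)).
  destruct (profile_mvt a m 0 x ltac:(lra) ltac:(lra) C0 Cx) as [t1 [Ht1 E1]].
  destruct (profile_mvt a m x R ltac:(lra) Ha Cx CR) as [t2 [Ht2 E2]].
  assert (HQ := profile_slope_monotone a m t1 t2 ltac:(lra) ltac:(lra) HK).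
  replace (profile a m R - profile a m 0)
    with ((profile a m R - profile a m x) + (profile a m x - profile a m 0)) by ring.
  rewrite E1, E2. apply Rlt_0_minus.
  replace (kappa m * ((R * R - x * x) * profile_slope a m t2 + (x * x - 0 * 0) * profile_slope a m t1) * (x * x) -
           kappa m * ((x * x - 0 * 0) * profile_slope a m t1) * (R * R))
    with ((x * x) * (R * R - x * x) * (kappa m * profile_slope a m t2 - kappa m * profile_slope a m t1)) by ring.
  apply Rmult_lt_0_compat; [apply Rmult_lt_0_compat; nra | lra].
Qed.

Lemma profile_chord a m x R : Rabs x <= R -> 0 <= a - 2 * R ->
  continuity_pt (profile a m) R -> kappa m <> 0 ->
  kappa m * (profile a m x - profile a m 0) * (R * R) <=
  kappa m * (profile a m R - profile a m 0) * (x * x) /\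
  (0 < Rabs x < R ->
   kappa m * (profile a m x - profile a m 0) * (R * R) <
   kappa m * (profile a m R - profile a m 0) * (x * x)).
Proof.
  intros HxR Ha CR HK. rewrite <- (profile_abs a m x), (sqr_abs x).
  assert (Hstrict : 0 < Rabs x < R ->
            kappa m * (profile a m (Rabs x) - profile a m 0) * (R * R) <
            kappa m * (profile a m R - profile a m 0) * (Rabs x * Rabs x))
    by (intros Hb; apply profile_chord_strict; assumption).
  split; [|exact Hstrict].
  destruct (Req_dec (Rabs x) 0) as [E0 | H0].
  - rewrite E0. right. ring.
  - destruct HxR as [Hlt | ->]; [left; apply Hstrict | right; ring].
    split; [|exact Hlt]. pose proof (Rabs_pos x). lra.
Qed.

Lemma rsum_ext n f g : (forall i, (i < n)%nat -> f i = g i) -> rsum n f = rsum n g.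
Proof. induction n as [|n IH]; simpl; intros H; [reflexivity|]. rewrite IH, H; auto; intros; apply H; lia. Qed.

Lemma rsum_plus n f g : rsum n (fun i => f i + g i) = rsum n f + rsum n g.
Proof. induction n as [|n IH]; simpl; [ring|]. rewrite IH; ring. Qed.

Lemma rsum_minus n f g : rsum n (fun i => f i - g i) = rsum n f - rsum n g.
Proof. induction n as [|n IH]; simpl; [ring|]. rewrite IH; ring. Qed.

Lemma rsum_scal n c f : rsum n (fun i => c * f i) = c * rsum n f.
Proof. induction n as [|n IH]; simpl; [ring|]. rewrite IH; ring. Qed.

Lemma rsum_const n c : rsum n (fun _ => c) = INR n * c.
Proof. induction n as [|n IH]; cbn [rsum]; [simpl; ring|]. rewrite IH, S_INR; ring. Qed.

Lemma rsum_zero n f : (forall i, (i < n)%nat -> f i = 0) -> rsum n f = 0.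
Proof. intros H. rewrite (rsum_ext _ _ (fun _ => 0)) by exact H. rewrite rsum_const; ring. Qed.

Lemma rsum_delta n j c : (j < n)%nat -> rsum n (fun i => if Nat.eq_dec i j then c else 0) = c.
Proof.
  induction n as [|n IH]; intros Hj; [lia|]. simpl.
  destruct (Nat.eq_dec n j) as [-> | Hne].
  - rewrite rsum_zero; [ring|]. intros i Hi. destruct (Nat.eq_dec i j); [lia | reflexivity].
  - rewrite IH by lia. ring.
Qed.

Lemma rsum_le n f g : (forall i, (i < n)%nat -> f i <= g i) -> rsum n f <= rsum n g.
Proof. induction n as [|n IH]; simpl; intros H; [lra|]. apply Rplus_le_compat; auto. Qed.

Lemma rsum_lt n f g : (forall i, (i < n)%nat -> f i <= g i) ->
  (exists j, (j < n)%nat /\ f j < g j) -> rsum n f < rsum n g.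
Proof.
  induction n as [|n IH]; simpl; intros H [j [Hj Hlt]]; [lia|].
  destruct (Nat.eq_dec j n) as [-> | Hne].
  - apply Rplus_le_lt_compat; [apply rsum_le; auto | exact Hlt].
  - apply Rplus_lt_le_compat; auto. apply IH; auto. exists j; split; [lia | exact Hlt].
Qed.

Lemma rsum_ge_term n f j : (forall i, (i < n)%nat -> 0 <= f i) -> (j < n)%nat -> f j <= rsum n f.
Proof.
  intros H Hj.
  rewrite (rsum_ext n f (fun i => (if Nat.eq_dec i j then f j else 0) + (if Nat.eq_dec i j then 0 else f i))).
  - rewrite rsum_plus, rsum_delta by exact Hj.
    assert (0 <= rsum n (fun i => if Nat.eq_dec i j then 0 else f i)).
    { assert (Hle := rsum_le n (fun _ => 0) (fun i => if Nat.eq_dec i j then 0 else f i)).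
      rewrite rsum_const, Rmult_0_r in Hle. apply Hle.
      intros i Hi. destruct (Nat.eq_dec i j); [lra | apply H, Hi]. }
    lra.
  - intros i Hi. destruct (Nat.eq_dec i j) as [-> | ]; ring.
Qed.

Lemma rsum_ge_two_terms n f i j : (forall k, (k < n)%nat -> 0 <= f k) ->
  (i < n)%nat -> (j < n)%nat -> i <> j -> f i + f j <= rsum n f.
Proof.
  intros H Hi Hj Hij.
  set (g := fun k => if Nat.eq_dec k i then 0 else f k).
  assert (Hg : f j <= rsum n g).
  { replace (f j) with (g j) by (unfold g; destruct (Nat.eq_dec j i); [lia | reflexivity]).
    apply rsum_ge_term; [|exact Hj]. intros k Hk. unfold g. destruct (Nat.eq_dec k i); [lra | auto]. }
  rewrite (rsum_ext n f (fun k => (if Nat.eq_dec k i then f i else 0) + g k)).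
  - rewrite rsum_plus, rsum_delta by exact Hi. lra.
  - intros k Hk. unfold g. destruct (Nat.eq_dec k i) as [-> | ]; ring.
Qed.

Lemma rsum_two n f : (2 <= n)%nat -> (forall i, (2 <= i)%nat -> f i = 0) ->
  rsum n f = f 0%nat + f 1%nat.
Proof.
  induction n as [|n IH]; intros Hn H; [lia|]. destruct (Nat.eq_dec n 1) as [-> | Hne].
  - simpl. ring.
  - cbn [rsum]. rewrite IH, (H n) by (lia || exact H). ring.
Qed.

Lemma dist2_vertex n M j s : (j < n)%nat ->
  dist2 n M (vertex j s) = rsum n (fun i => M i ^ 2) - 2 * s * M j + s ^ 2.
Proof.
  intros Hj. unfold dist2.
  rewrite (rsum_ext _ _ (fun i => M i ^ 2 + (if Nat.eq_dec i j then s ^ 2 - 2 * s * M j else 0))).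
  - rewrite rsum_plus, rsum_delta by exact Hj. ring.
  - intros i Hi. unfold vertex. destruct (Nat.eq_dec i j) as [-> | ]; ring.
Qed.

Lemma sign_base_bound c s x : is_sign s -> c - 2 * Rabs x <= c - 2 * (s * x).
Proof.
  intros [-> | ->].
  - pose proof (Rle_abs x). lra.
  - pose proof (Rle_abs (- x)). rewrite Rabs_Ropp in *. lra.
Qed.

Section Sphere.
Variables (n : nat) (r h : R).
Hypotheses (Hn : (2 <= n)%nat) (Hr : 0 < r) (Hh : 0 <= h).

(* On the sphere |N (s e_j)|^2 + h = a - 2 s N_j. *)
Let a := r ^ 2 + 1 + h.
Let x0 := r / sqrt (INR n).

Lemma vertex_base N j s : on_sphere n r N -> is_sign s -> (j < n)%nat ->
  dist2 n N (vertex j s) + h = a - 2 * (s * N j).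
Proof.
  intros HN Hs Hj. rewrite dist2_vertex by exact Hj. unfold on_sphere in HN. rewrite HN.
  unfold a. destruct Hs as [-> | ->]; ring.
Qed.

Lemma Cn_profile lam M : on_sphere n r M ->
  Cn n h lam M = rsum n (fun j => profile a (lam / 2) (M j)).
Proof.
  intros HM. unfold Cn. apply rsum_ext. intros j Hj.
  rewrite (vertex_base M j 1), (vertex_base M j (-1)); try assumption;
    [| right; reflexivity | left; reflexivity].
  unfold profile. f_equal; f_equal; ring.
Qed.

Lemma sphere_sum_sq N : on_sphere n r N -> rsum n (fun j => N j * N j) = r * r.
Proof.
  intros HN. unfold on_sphere in HN. replace (r * r) with (r ^ 2) by ring. rewrite <- HN.
  apply rsum_ext. intros. ring.
Qed.

Lemma coord_bound N j : on_sphere n r N -> (j < n)%nat -> Rabs (N j) <= r.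
Proof.
  intros HN Hj.
  assert (H : N j ^ 2 <= r ^ 2).
  { unfold on_sphere in HN. rewrite <- HN.
    apply (rsum_ge_term n (fun i => N i ^ 2)); [intros; apply pow2_ge_0 | exact Hj]. }
  rewrite <- (Rabs_pos_eq r) by lra. apply Rsqr_le_abs_0. unfold Rsqr. nra.
Qed.

(* a - 2r = (r - 1)^2 + h vanishes only in the degenerate case h = 0, r = 1. *)
Lemma base_gap : 0 <= a - 2 * r.
Proof. unfold a. pose proof (Rle_0_sqr (r - 1)). unfold Rsqr in *. nra. Qed.

Lemma base_gap_strict : ~ (h = 0 /\ r = 1) -> 0 < a - 2 * r.
Proof.
  intros Hnd. unfold a. replace (r ^ 2 + 1 + h - 2 * r) with ((r - 1) * (r - 1) + h) by ring.
  destruct Hh as [Hpos | <-]; [pose proof (Rle_0_sqr (r - 1)); unfold Rsqr in *; lra|].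
  assert (r - 1 <> 0) by (intros E; apply Hnd; split; [reflexivity | lra]).
  pose proof (Rsqr_pos_lt (r - 1) H). unfold Rsqr in *. lra.
Qed.

Lemma facet_modulus : 0 < x0 < r /\ x0 * x0 * INR n = r * r.
Proof.
  assert (H2 : 2 <= INR n) by (replace 2 with (INR 2) by (simpl; ring); apply le_INR, Hn).
  assert (Hs1 : 1 < sqrt (INR n)) by (rewrite <- sqrt_1; apply sqrt_lt_1; lra).
  assert (E := sqrt_sqrt (INR n) ltac:(lra)).
  unfold x0. repeat split.
  - apply Rdiv_lt_0_compat; lra.
  - apply Rmult_lt_reg_r with (sqrt (INR n)); [lra|]. unfold Rdiv.
    rewrite Rmult_assoc, Rinv_l by lra. nra.
  - rewrite <- E at 3. field. lra.
Qed.

Lemma D_coord_abs M j : inD n r M -> (j < n)%nat -> Rabs (M j) = x0.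
Proof.
  intros [eps [He HM]] Hj. destruct facet_modulus as [[Hx0 _] _].
  rewrite HM by exact Hj. fold x0. destruct (He j Hj) as [-> | ->].
  - rewrite Rmult_1_r. apply Rabs_pos_eq. lra.
  - rewrite Rabs_mult, (Rabs_pos_eq x0), (Rabs_left (-1)) by lra. ring.
Qed.

Lemma D_on_sphere M : inD n r M -> on_sphere n r M.
Proof.
  intros HD. destruct facet_modulus as [_ Hx]. unfold on_sphere.
  rewrite (rsum_ext _ _ (fun _ => x0 * x0)).
  - rewrite rsum_const. simpl. lra.
  - intros i Hi. rewrite <- (D_coord_abs M i HD Hi), <- sqr_abs. ring.
Qed.

Lemma not_D_coord N : ~ inD n r N -> exists j, (j < n)%nat /\ Rabs (N j) <> x0.
Proof.
  intros HD. apply NNPP. intros Hno. apply HD. destruct facet_modulus as [[Hx0 _] _].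
  assert (Hall : forall j, (j < n)%nat -> Rabs (N j) = x0)
    by (intros j Hj; apply NNPP; intros Hne; apply Hno; exists j; auto).
  exists (fun i => N i / x0). split.
  - intros i Hi. specialize (Hall i Hi). unfold Rabs in Hall. unfold is_sign.
    destruct (Rcase_abs (N i)); [right | left]; rewrite <- Hall; field; lra.
  - intros i Hi. fold x0. field. lra.
Qed.

Lemma E_on_sphere M : inE n r M -> on_sphere n r M.
Proof.
  intros [j [s [Hj [Hs HM]]]]. unfold on_sphere.
  rewrite (rsum_ext _ _ (fun i => if Nat.eq_dec i j then r ^ 2 else 0)).
  - apply rsum_delta, Hj.
  - intros i Hi. rewrite HM by exact Hi. unfold vertex.
    destruct (Nat.eq_dec i j); [destruct Hs as [-> | ->] |]; ring.
Qed.

Lemma not_E_coord N : on_sphere n r N -> ~ inE n r N ->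
  exists j, (j < n)%nat /\ 0 < Rabs (N j) < r.
Proof.
  intros HN HE. apply NNPP. intros Hno. apply HE.
  assert (Hall : forall j, (j < n)%nat -> N j = 0 \/ Rabs (N j) = r).
  { intros j Hj. destruct (Req_dec (N j) 0) as [E | E]; [left; exact E | right].
    assert (0 < Rabs (N j)) by (apply Rabs_pos_lt, E).
    destruct (coord_bound N j HN Hj) as [Hlt | Heq]; [|exact Heq].
    exfalso. apply Hno. exists j. auto. }
  assert (Hex : exists j, (j < n)%nat /\ Rabs (N j) = r).
  { apply NNPP. intros Hno2. unfold on_sphere in HN.
    rewrite rsum_zero in HN; [assert (0 < r ^ 2) by (simpl; nra); lra|].
    intros i Hi. destruct (Hall i Hi) as [-> | E]; [ring|].
    exfalso. apply Hno2. exists i. auto. }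
  destruct Hex as [j [Hj Ej]].
  exists j, (N j / r). split; [exact Hj|]. split.
  - unfold is_sign, Rabs in *. destruct (Rcase_abs (N j)); [right | left]; rewrite <- Ej; field; lra.
  - intros i Hi. unfold vertex. destruct (Nat.eq_dec i j) as [-> | Hij]; [field; lra|].
    rewrite Rmult_0_r. destruct (Hall i Hi) as [E | E]; [exact E|]. exfalso.
    assert (H2 := rsum_ge_two_terms n (fun k => N k * N k) i j
                    ltac:(intros; apply Rle_0_sqr) Hi Hj Hij).
    cbv beta in H2. rewrite sphere_sum_sq, !(sqr_abs (N _)), E, Ej in H2 by exact HN. nra.
Qed.

Lemma sphere_finite lam N : on_sphere n r N -> (0 <= lam \/ ~ (h = 0 /\ r = 1)) ->
  C_finite n h lam N.
Proof.
  intros HN [Hl | Hnd]; [left; exact Hl|]. right. intros j s Hj Hs.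
  rewrite (vertex_base N j s HN Hs Hj).
  pose proof (coord_bound N j HN Hj). pose proof (sign_base_bound a s (N j) Hs).
  pose proof (base_gap_strict Hnd). lra.
Qed.

Lemma D_finite lam M : inD n r M -> C_finite n h lam M.
Proof.
  intros HD. right. intros j s Hj Hs.
  rewrite (vertex_base M j s (D_on_sphere M HD) Hs Hj).
  pose proof (sign_base_bound a s (M j) Hs). rewrite (D_coord_abs M j HD Hj) in *.
  destruct facet_modulus as [[_ Hx0r] _]. pose proof base_gap. lra.
Qed.

Lemma continuity_on_sphere lam N j : lam <> 0 -> on_sphere n r N -> C_finite n h lam N ->
  (j < n)%nat -> continuity_pt (profile a (lam / 2)) (Rabs (N j)).
Proof.
  intros Hl HN HF Hj. pose proof (coord_bound N j HN Hj). pose proof base_gap.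
  apply continuity_profile; [unfold a; simpl; nra | apply Rabs_pos | lra |].
  destruct (Rlt_or_le 0 lam) as [Hp | Hneg]; [right; lra | left].
  destruct HF as [Hl' | Hpos]; [lra|].
  unfold Rabs. destruct (Rcase_abs (N j)).
  - assert (E := vertex_base N j (-1) HN (or_intror eq_refl) Hj).
    specialize (Hpos j (-1) Hj (or_intror eq_refl)). lra.
  - assert (E := vertex_base N j 1 HN (or_introl eq_refl) Hj).
    specialize (Hpos j 1 Hj (or_introl eq_refl)). lra.
Qed.

Lemma continuity_at_radius lam : (0 < lam \/ ~ (h = 0 /\ r = 1)) ->
  continuity_pt (profile a (lam / 2)) r.
Proof.
  intros Hc. pose proof base_gap. apply continuity_profile; [unfold a; simpl; nra | lra | lra |].
  destruct Hc as [Hl | Hnd]; [right; lra | left; apply base_gap_strict, Hnd].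
Qed.

Lemma D_value s M : inD n r M -> rsum n (fun j => profile a s (M j)) = INR n * profile a s x0.
Proof.
  intros HD. rewrite <- rsum_const. apply rsum_ext. intros i Hi.
  rewrite <- profile_abs, D_coord_abs by assumption. reflexivity.
Qed.

Lemma E_value s M : inE n r M ->
  rsum n (fun j => profile a s (M j)) = INR n * profile a s 0 + (profile a s r - profile a s 0).
Proof.
  intros [j [sg [Hj [Hs HM]]]].
  rewrite (rsum_ext _ _ (fun i => profile a s 0 +
                             (if Nat.eq_dec i j then profile a s r - profile a s 0 else 0))).
  - rewrite rsum_plus, rsum_delta, rsum_const by exact Hj. reflexivity.
  - intros i Hi. rewrite HM by exact Hi. unfold vertex.
    destruct (Nat.eq_dec i j); [|rewrite Rmult_0_r; ring].
    assert (Hrs : Rabs (r * sg) = r).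
    { rewrite Rabs_mult, (Rabs_pos_eq r) by lra.
      destruct Hs as [-> | ->]; [rewrite Rabs_R1 | rewrite (Rabs_left (-1)) by lra]; ring. }
    rewrite <- profile_abs, Hrs. ring.
Qed.

Lemma kappa_lam_nonzero lam : kappa (lam / 2) <> 0 -> lam <> 0.
Proof. intros HK ->. apply HK. unfold kappa. field. Qed.

(* Tangent inequality at x0, summed over the coordinates: points of D are
   extremal, minimal if kappa > 0 and maximal if kappa < 0. *)
Lemma compare_with_D lam M N : kappa (lam / 2) <> 0 -> inD n r M ->
  on_sphere n r N -> C_finite n h lam N ->
  0 <= kappa (lam / 2) * (Cn n h lam N - Cn n h lam M) /\
  (~ inD n r N -> 0 < kappa (lam / 2) * (Cn n h lam N - Cn n h lam M)).
Proof.
  intros HK HD HN HF. set (m := lam / 2) in *.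
  destruct facet_modulus as [[Hx0 Hx0r] Hx0n]. pose proof base_gap.
  set (tangent := fun j => kappa m * profile_slope a m x0 * (N j * N j - x0 * x0)).
  assert (Hsum0 : rsum n tangent = 0).
  { unfold tangent. rewrite rsum_scal, rsum_minus, rsum_const, sphere_sum_sq by exact HN.
    rewrite <- Hx0n. ring. }
  assert (Hpt : forall j, (j < n)%nat ->
            tangent j <= kappa m * (profile a m (N j) - profile a m x0) /\
            (Rabs (N j) <> x0 -> tangent j < kappa m * (profile a m (N j) - profile a m x0))).
  { intros j Hj. pose proof (coord_bound N j HN Hj).
    apply profile_tangent; try assumption; try lra.
    apply continuity_on_sphere; try assumption. apply kappa_lam_nonzero, HK. }
  assert (Hdiff : kappa m * (Cn n h lam N - Cn n h lam M) =
                  rsum n (fun j => kappa m * (profile a m (N j) - profile a m x0))).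
  { rewrite (Cn_profile lam N HN), (Cn_profile lam M (D_on_sphere M HD)). fold m.
    rewrite (D_value m M HD).
    rewrite rsum_scal, rsum_minus, rsum_const. reflexivity. }
  rewrite Hdiff, <- Hsum0. split.
  - apply rsum_le. intros j Hj. apply Hpt, Hj.
  - intros HnD. destruct (not_D_coord N HnD) as [j [Hj Hne]].
    apply rsum_lt; [intros i Hi; apply Hpt, Hi|]. exists j. split; [exact Hj|]. apply Hpt; assumption.
Qed.

(* Chord inequality on [0, r], summed over the coordinates: points of E are
   extremal, maximal if kappa > 0 and minimal if kappa < 0. *)
Lemma compare_with_E lam M N : kappa (lam / 2) <> 0 -> (0 < lam \/ ~ (h = 0 /\ r = 1)) ->
  inE n r M -> on_sphere n r N ->
  kappa (lam / 2) * (Cn n h lam N - Cn n h lam M) <= 0 /\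
  (~ inE n r N -> kappa (lam / 2) * (Cn n h lam N - Cn n h lam M) < 0).
Proof.
  intros HK Hreg HE HN. set (m := lam / 2) in *. pose proof base_gap as Hgap.
  set (f := profile a m).
  assert (Hpt : forall j, (j < n)%nat ->
            kappa m * (f (N j) - f 0) * (r * r) <= kappa m * (f r - f 0) * (N j * N j) /\
            (0 < Rabs (N j) < r ->
             kappa m * (f (N j) - f 0) * (r * r) < kappa m * (f r - f 0) * (N j * N j))).
  { intros j Hj. apply profile_chord; [apply coord_bound; assumption | exact Hgap | | exact HK].
    apply continuity_at_radius, Hreg. }
  assert (Hlhs : rsum n (fun j => kappa m * (f (N j) - f 0) * (r * r)) =
                 kappa m * (rsum n (fun j => f (N j)) - INR n * f 0) * (r * r)).
  { rewrite (rsum_ext _ _ (fun j => (kappa m * (r * r)) * (f (N j) - f 0))) by (intros; ring).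
    rewrite rsum_scal, rsum_minus, rsum_const. ring. }
  assert (Hrhs : rsum n (fun j => kappa m * (f r - f 0) * (N j * N j)) = kappa m * (f r - f 0) * (r * r))
    by (rewrite rsum_scal, sphere_sum_sq by exact HN; reflexivity).
  assert (Hdiff : kappa m * (Cn n h lam N - Cn n h lam M) * (r * r) =
                  rsum n (fun j => kappa m * (f (N j) - f 0) * (r * r)) -
                  rsum n (fun j => kappa m * (f r - f 0) * (N j * N j))).
  { rewrite Hlhs, Hrhs, (Cn_profile lam N HN), (Cn_profile lam M (E_on_sphere M HE)). fold m.
    rewrite (E_value m M HE).
    unfold f. ring. }
  assert (Hr2 : 0 < r * r) by nra.
  split.
  - apply Rmult_le_reg_r with (r * r); [exact Hr2|]. rewrite Rmult_0_l, Hdiff.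
    assert (rsum n (fun j => kappa m * (f (N j) - f 0) * (r * r)) <=
            rsum n (fun j => kappa m * (f r - f 0) * (N j * N j)))
      by (apply rsum_le; intros j Hj; apply Hpt, Hj).
    lra.
  - intros HnE. apply Rmult_lt_reg_r with (r * r); [exact Hr2|]. rewrite Rmult_0_l, Hdiff.
    destruct (not_E_coord N HN HnE) as [j [Hj Hb]].
    assert (rsum n (fun j => kappa m * (f (N j) - f 0) * (r * r)) <
            rsum n (fun j => kappa m * (f r - f 0) * (N j * N j))).
    { apply rsum_lt; [intros i Hi; apply Hpt, Hi|]. exists j. split; [exact Hj|]. apply Hpt; assumption. }
    lra.
Qed.

End Sphere.

Lemma kappa_pos m : m < 0 \/ 1 < m < 2 \/ 3 < m -> 0 < kappa m.
Proof.
  unfold kappa. intros Hm.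
  replace (m * (m - 1) * (m - 2) * (m - 3)) with ((m * (m - 1)) * ((m - 2) * (m - 3))) by ring.
  destruct Hm as [H | [H | H]]; [apply Rmult_lt_0_compat; nra | | apply Rmult_lt_0_compat; nra].
  replace ((m - 2) * (m - 3)) with ((2 - m) * (3 - m)) by ring. apply Rmult_lt_0_compat; nra.
Qed.

Lemma kappa_neg m : 0 < m < 1 \/ 2 < m < 3 -> kappa m < 0.
Proof.
  unfold kappa. intros Hm. apply Ropp_lt_cancel. rewrite Ropp_0.
  destruct Hm as [H | H].
  - replace (- (m * (m - 1) * (m - 2) * (m - 3))) with ((m * (1 - m)) * ((m - 2) * (m - 3))) by ring.
    apply Rmult_lt_0_compat; nra.
  - replace (- (m * (m - 1) * (m - 2) * (m - 3))) with ((m * (m - 1)) * ((m - 2) * (3 - m))) by ring.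
    apply Rmult_lt_0_compat; nra.
Qed.

Section Extremal.
Variables (n : nat) (r h lam : R).
Hypotheses (Hn : (2 <= n)%nat) (Hr : 0 < r) (Hh : 0 <= h).

Lemma min_at_D : 0 < kappa (lam / 2) -> min_exactly_at n r h lam (inD n r).
Proof.
  intros HK M HD. split; [apply (D_finite n r h Hn Hr Hh), HD|]. intros N HN HF.
  destruct (compare_with_D n r h Hn Hr Hh lam M N ltac:(lra) HD HN HF) as [Hle Hlt].
  split; [|intros HnD; specialize (Hlt HnD)]; nra.
Qed.

Lemma max_at_D : kappa (lam / 2) < 0 -> 0 < lam -> max_exactly_at n r h lam (inD n r).
Proof.
  intros HK Hl.
  assert (Hfin : forall N, on_sphere n r N -> C_finite n h lam N)
    by (intros N HN; apply (sphere_finite n r h Hr Hh); [exact HN | left; lra]).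
  split; [exact Hfin|]. intros M HD N HN.
  destruct (compare_with_D n r h Hn Hr Hh lam M N ltac:(lra) HD HN (Hfin N HN)) as [Hle Hlt].
  split; [|intros HnD; specialize (Hlt HnD)]; nra.
Qed.

Lemma max_at_E : 0 < kappa (lam / 2) -> (0 < lam \/ ~ (h = 0 /\ r = 1)) ->
  max_exactly_at n r h lam (inE n r).
Proof.
  intros HK Hreg. split.
  { intros N HN. apply (sphere_finite n r h Hr Hh); [exact HN|]. destruct Hreg; [left; lra | right; assumption]. }
  intros M HE N HN.
  destruct (compare_with_E n r h Hr Hh lam M N ltac:(lra) Hreg HE HN) as [Hle Hlt].
  split; [|intros HnE; specialize (Hlt HnE)]; nra.
Qed.

Lemma min_at_E : kappa (lam / 2) < 0 -> 0 < lam -> min_exactly_at n r h lam (inE n r).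
Proof.
  intros HK Hl M HE. split; [apply (sphere_finite n r h Hr Hh); [apply E_on_sphere, HE | left; lra]|].
  intros N HN _.
  destruct (compare_with_E n r h Hr Hh lam M N ltac:(lra) (or_introl Hl) HE HN) as [Hle Hlt].
  split; [|intros HnE; specialize (Hlt HnE)]; nra.
Qed.

End Extremal.

Lemma rpow_unbounded_near_0 m K : m < 0 -> exists e, 0 < e < 1 /\ K < rpow e m.
Proof.
  intros Hm. set (b := Rabs K + 2). pose proof (Rle_abs K).
  assert (Hb : 1 < b) by (unfold b; pose proof (Rabs_pos K); lra).
  exists (Rpower b (/ m)). assert (He0 : 0 < Rpower b (/ m)) by (unfold Rpower; apply exp_pos).
  split; [split; [exact He0|] |].
  - unfold Rpower. rewrite <- exp_0. apply exp_increasing.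
    assert (0 < ln b) by (rewrite <- ln_1; apply ln_increasing; lra).
    assert (/ m < 0) by (apply Rinv_lt_0_compat, Hm). nra.
  - rewrite rpow_pos, Rpower_mult, Rinv_l, Rpower_1 by lra. unfold b. lra.
Qed.

(* Degenerate case h = 0, r = 1, lambda < 0: the sphere passes through the
   vertices, and C_n blows up at points approaching the vertex e_1. *)
Lemma degenerate_unbounded n lam : (2 <= n)%nat -> lam < 0 ->
  forall K, exists M, on_sphere n 1 M /\ C_finite n 0 lam M /\ K < Cn n 0 lam M.
Proof.
  intros Hn Hl K.
  destruct (rpow_unbounded_near_0 (lam / 2) K ltac:(lra)) as [e [He HeK]].
  set (c := 1 - e / 2). set (d := sqrt (1 - c * c)).
  assert (Hc : 0 < c < 1) by (unfold c; lra).
  assert (Hd0 : 0 <= d) by apply sqrt_pos.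
  assert (Hd2 : d * d = 1 - c * c) by (apply sqrt_sqrt; nra).
  set (M := fun i : nat => match i with O => c | S O => d | _ => 0 end).
  assert (HM : on_sphere n 1 M).
  { unfold on_sphere. rewrite rsum_two; [simpl; nra | exact Hn |].
    intros [|[|i]] Hi; [lia | lia | simpl; ring]. }
  assert (Hsmall : forall j, Rabs (M j) < 1).
  { intros [|[|j]]; simpl; [rewrite Rabs_pos_eq | rewrite Rabs_pos_eq | rewrite Rabs_R0]; nra. }
  exists M. split; [exact HM|]. split.
  - right. intros j s Hj Hs. rewrite (vertex_base n 1 0 M j s HM Hs Hj).
    pose proof (sign_base_bound (1 ^ 2 + 1 + 0) s (M j) Hs). specialize (Hsmall j). simpl in *. lra.
  - rewrite (Cn_profile n 1 0 lam M HM).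
    apply Rlt_le_trans with (profile (1 ^ 2 + 1 + 0) (lam / 2) (M 0%nat)).
    + unfold profile. pose proof (rpow_nonneg (1 ^ 2 + 1 + 0 + 2 * M 0%nat) (lam / 2)).
      replace (1 ^ 2 + 1 + 0 - 2 * M 0%nat) with e by (simpl; unfold c; field). lra.
    + apply (rsum_ge_term n (fun j => profile (1 ^ 2 + 1 + 0) (lam / 2) (M j))); [|lia].
      intros; apply profile_nonneg.
Qed.

Lemma rpow_nat u k : 0 <= u -> rpow u (INR k) = u ^ k.
Proof.
  intros [Hu | <-]; [rewrite rpow_pos by exact Hu; apply Rpower_pow, Hu|].
  unfold rpow. destruct (Rlt_dec 0 0); [lra|]. destruct k as [|k].
  - simpl. destruct (Req_EM_T 0 0); [reflexivity | lra].
  - destruct (Req_EM_T (INR (S k)) 0) as [E | _]; [exfalso; apply (not_0_INR (S k)); auto|].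
    simpl. ring.
Qed.

(* If lambda/2 = k is a natural number and (c - 2x)^k + (c + 2x)^k is affine in
   x^2, then C_n is constant on the sphere (the sum of squares is fixed). *)
Lemma constant_if_affine_in_sq n r h lam k al be : 0 < r -> 0 <= h -> lam / 2 = INR k ->
  (forall x, (r ^ 2 + 1 + h - 2 * x) ^ k + (r ^ 2 + 1 + h + 2 * x) ^ k = al + be * x ^ 2) ->
  constant_on_sphere n r h lam.
Proof.
  intros Hr Hh Hk Hpoly.
  assert (Hv : forall M, on_sphere n r M -> Cn n h lam M = INR n * al + be * r ^ 2).
  { intros M HM. rewrite (Cn_profile n r h lam M HM), (rsum_ext _ _ (fun j => al + be * M j ^ 2)).
    - rewrite rsum_plus, rsum_const, rsum_scal, HM. ring.
    - intros j Hj. rewrite <- Hpoly. unfold profile. rewrite Hk.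
      pose proof (coord_bound n r Hr M j HM Hj). pose proof (base_gap r h Hh).
      pose proof (sign_base_bound (r ^ 2 + 1 + h) 1 (M j) (or_introl eq_refl)).
      pose proof (sign_base_bound (r ^ 2 + 1 + h) (-1) (M j) (or_intror eq_refl)).
      rewrite !rpow_nat by lra. reflexivity. }
  intros M N HM HN _ _. rewrite (Hv M HM), (Hv N HN). reflexivity.
Qed.

Lemma constant_at_exceptional n r h lam : 0 < r -> 0 <= h ->
  (lam = 0 \/ lam = 2 \/ lam = 4 \/ lam = 6) -> constant_on_sphere n r h lam.
Proof.
  intros Hr Hh Hl. pose (c := r ^ 2 + 1 + h).
  destruct Hl as [-> | [-> | [-> | ->]]].
  - apply (constant_if_affine_in_sq n r h 0 0 2 0); auto; [simpl; field | intros; unfold c; simpl; ring].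
  - apply (constant_if_affine_in_sq n r h 2 1 (2 * c) 0); auto; [simpl; field | intros; unfold c; simpl; ring].
  - apply (constant_if_affine_in_sq n r h 4 2 (2 * c ^ 2) 8); auto; [simpl; field | intros; unfold c; simpl; ring].
  - apply (constant_if_affine_in_sq n r h 6 3 (2 * c ^ 3) (24 * c)); auto;
      [simpl; field | intros; unfold c; simpl; ring].
Qed.

(* Conversely, for kappa(lambda/2) <> 0 the point (x0, ..., x0) of D and the
   point r e_1 of E give different values of C_n. *)
Lemma constant_only_exceptional n r h lam : (2 <= n)%nat -> 0 < r -> 0 <= h ->
  constant_on_sphere n r h lam -> lam = 0 \/ lam = 2 \/ lam = 4 \/ lam = 6.
Proof.
  intros Hn Hr Hh Hconst. apply NNPP. intros Hno.
  assert (HK : kappa (lam / 2) <> 0).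
  { unfold kappa. intros E. apply Hno.
    repeat (apply Rmult_integral in E; destruct E as [E | E]); lra. }
  set (MD := fun _ : nat => r / sqrt (INR n)).
  assert (HD : inD n r MD) by (exists (fun _ => 1); split; [left; reflexivity | intros i Hi; unfold MD; ring]).
  assert (HDs := D_on_sphere n r Hn Hr MD HD).
  assert (HnE : ~ inE n r MD).
  { intros [j [s [Hj [Hs HM]]]]. destruct (facet_modulus n r Hn Hr) as [[Hx0 _] _].
    set (i := match j with O => 1%nat | _ => 0%nat end).
    specialize (HM i ltac:(unfold i; destruct j; lia)). unfold vertex, MD in HM.
    destruct (Nat.eq_dec i j); [unfold i in *; destruct j; lia | lra]. }
  set (ME := fun i => r * vertex 0 1 i).
  assert (HE : inE n r ME) by (exists 0%nat, 1; repeat split; [lia | left; reflexivity]).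
  destruct (classic (0 < lam \/ ~ (h = 0 /\ r = 1))) as [Hreg | Hdeg].
  - assert (HEf : C_finite n h lam ME).
    { apply (sphere_finite n r h Hr Hh); [apply E_on_sphere, HE|].
      destruct Hreg; [left; lra | right; assumption]. }
    assert (Heq := Hconst MD ME HDs (E_on_sphere n r ME HE) (D_finite n r h Hn Hr Hh lam MD HD) HEf).
    destruct (compare_with_E n r h Hr Hh lam ME MD HK Hreg HE HDs) as [_ Hlt].
    specialize (Hlt HnE). rewrite Heq in Hlt. nra.
  - assert (Hl : lam < 0).
    { pose proof (kappa_lam_nonzero lam HK). destruct (Rlt_or_le 0 lam); [|lra].
      exfalso. apply Hdeg. left. assumption. }
    destruct (classic (h = 0 /\ r = 1)) as [[-> ->] | Hnd]; [|apply Hdeg; right; exact Hnd].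
    destruct (degenerate_unbounded n lam Hn Hl (Cn n 0 lam MD)) as [M [HM [HMf HMc]]].
    rewrite (Hconst MD M HDs HM (D_finite n 1 0 Hn Hr Hh lam MD HD) HMf) in HMc. lra.
Qed.

Theorem theorem6p2 (n : nat) (r h : R) :
  (2 <= n)%nat -> 0 < r -> 0 <= h ->
  (* (1) lambda < 0 *)
  (forall lam, lam < 0 ->
     min_exactly_at n r h lam (inD n r) /\
     (~ (h = 0 /\ r = 1) -> max_exactly_at n r h lam (inE n r)) /\
     (h = 0 /\ r = 1 ->
        forall K, exists M, on_sphere n r M /\ C_finite n h lam M /\ K < Cn n h lam M))
  /\
  (* (2) *)
  (forall lam, (lam = 0 \/ lam = 2 \/ lam = 4 \/ lam = 6) ->
     constant_on_sphere n r h lam) /\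
  (forall lam, constant_on_sphere n r h lam ->
     lam = 0 \/ lam = 2 \/ lam = 4 \/ lam = 6) /\
  (forall lam, (0 < lam < 2 \/ 4 < lam < 6) ->
     max_exactly_at n r h lam (inD n r) /\ min_exactly_at n r h lam (inE n r)) /\
  (forall lam, 2 < lam < 4 ->
     min_exactly_at n r h lam (inD n r) /\ max_exactly_at n r h lam (inE n r))
  /\
  (* (3) lambda > 6 *)
  (forall lam, 6 < lam ->
     max_exactly_at n r h lam (inE n r) /\ min_exactly_at n r h lam (inD n r)).
Proof.
  intros Hn Hr Hh.
  split; [|split; [|split; [|split; [|split]]]].
  - intros lam Hl. assert (HK : 0 < kappa (lam / 2)) by (apply kappa_pos; lra).
    split; [|split].
    + apply min_at_D; assumption.
    + intros Hnd. apply max_at_E; [assumption .. | right; exact Hnd].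
    + intros [-> ->]. apply degenerate_unbounded; assumption.
  - intros lam Hl. apply constant_at_exceptional; assumption.
  - intros lam Hc. apply (constant_only_exceptional n r h); assumption.
  - intros lam Hl. assert (HK : kappa (lam / 2) < 0) by (apply kappa_neg; lra).
    split; [apply max_at_D | apply min_at_E]; try assumption; lra.
  - intros lam Hl. assert (HK : 0 < kappa (lam / 2)) by (apply kappa_pos; lra).
    split; [apply min_at_D | apply max_at_E]; try assumption; left; lra.
  - intros lam Hl. assert (HK : 0 < kappa (lam / 2)) by (apply kappa_pos; lra).
    split; [apply max_at_E | apply min_at_D]; try assumption; left; lra.
Qed.
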